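(* Let $\mathfrak S=(S,\xrightarrow{F},\le)$ be an $\infty$-effective complete functional WSTS, $s_0\in S$, and, for a (fair) execution of the procedure $\mathbf{Clover}_{\mathfrak S}$ on input $s_0$, let $A_n$ be the value of the set $A$ after $n$ iterations of the while statement. If $\bigcup_n A_n$ is finite, then the procedure $\mathbf{Clover}_{\mathfrak S}$ terminates on input $s_0$.
   Context: A complete functional WSTS is a functional transition system $(S,\xrightarrow{F},\le)$ ($F$ a finite set of partial maps, $s\to f(s)$ for $s\in\operatorname{dom}f$) such that $(S,\le)$ is a well partial order which is a continuous dcpo, and each $f\in F$ is partial continuous (Scott-open domain, $f(\bigvee D)=\bigvee f(D)$ for directed $D\subseteq\operatorname{dom}f$). $Post(A)$ is the set of one-step successors of elements of $A$. $F^*$: finite compositions of maps in $F$. Lub-acceleration: $\operatorname{dom}g^\infty=\operatorname{dom}g$, $g^\infty(x)=\bigvee_n g^n(x)$ if $x<g(x)$, else $g(x)$. $\infty$-effective: states finitely coded, $\le$ decidable, each $f\in F$ computable with decidable domain, each $g^\infty$ ($g\in F^*$) computable. Procedure $\mathbf{Clover}_{\mathfrak S}(s_0)$: $A\leftarrow\{s_0\}$; while $Post(A)\not\le^\flat A$ do: choose fairly $(g,a)\in F^*\times A$ with $a\in\operatorname{dom}g$ and set $A\leftarrow A\cup\{g^\infty(a)\}$; return $\operatorname{Max}A$. Here $B\le^\flat C$ iff $\downarrow B\subseteq\downarrow C$. Fairness: on every infinite execution, every pair $(g,a)\in F^*\times A_m$ with $a\in\operatorname{dom}g$ is picked at some stage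 $n\ge m$. *)

From mathcomp Require Import all_boot.
Set Implicit Arguments. Unset Strict Implicit. Unset Printing Implicit Defensive.

Section Order.
Variables (S : Type) (le : rel S).

Definition partial_order : Prop :=
  [/\ (forall x, le x x),
      (forall x y, le x y -> le y x -> x = y) &
      (forall x y z, le x y -> le y z -> le x z)].

Definition lt (x y : S) : Prop := le x y /\ x <> y.

Definition wpo : Prop :=
  partial_order /\ forall s : nat -> S, exists i j, (i < j)%N /\ le (s i) (s j).

Definition directed (D : S -> Prop) : Prop :=
  (exists d, D d) /\
  forall x y, D x -> D y -> exists z, [/\ D z, le x z & le y z].

Definition is_lub (D : S -> Prop) (u : S) : Prop :=
  (forall d, D d -> le d u) /\ (forall v, (forall d, D d -> le d v) -> le u v).

Definition dcpo : Prop :=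
  partial_order /\ forall D, directed D -> exists u, is_lub D u.

Definition way_below (x y : S) : Prop :=
  forall D u, directed D -> is_lub D u -> le y u -> exists d, D d /\ le x d.

Definition continuous_dcpo : Prop :=
  dcpo /\ forall y, directed (fun x => way_below x y) /\ is_lub (fun x => way_below x y) y.

Definition scott_open (U : S -> Prop) : Prop :=
  (forall x y, U x -> le x y -> U y) /\
  (forall D u, directed D -> is_lub D u -> U u -> exists d, D d /\ U d).

(* partial maps S -> S are functions S -> option S; dom f = {x | f x <> None} *)
Definition dom (f : S -> option S) (x : S) : Prop := f x <> None.

Definition partial_continuous (f : S -> option S) : Prop :=
  scott_open (dom f) /\
  forall D u, directed D -> (forall d, D d -> dom f d) -> is_lub D u ->
    exists v, f u = Some v /\
      is_lub (fun w => exists d, D d /\ f d = Some w) v.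

End Order.

(* Functional transition systems: F is a finite family (I : finType)   *)
(* of partial maps; F^* = finite words over I (composition).           *)
Section FTS.
Variables (S : Type) (I : finType) (le : rel S) (F : I -> S -> option S).

(* comp [:: i1; ...; ik] = f_ik o ... o f_i1 (f_i1 applied first);    *)
Fixpoint comp (w : seq I) (x : S) : option S :=
  match w with
  | [::] => Some x
  | i :: w' => obind (comp w') (F i x)
  end.

Fixpoint iter_opt (n : nat) (w : seq I) (x : S) : option S :=
  match n with
  | 0 => Some x
  | n'.+1 => obind (comp w) (iter_opt n' w x)
  end.

Definition complete_functional_WSTS : Prop :=
  [/\ wpo le, continuous_dcpo le & forall i, partial_continuous le (F i)].

(* lub-acceleration, as a (functional, by uniqueness of lubs) relation: *)
(* accel g x y  <->  x \in dom g  and  y = g^oo(x).                     *)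
Definition accel (g : seq I) (x y : S) : Prop :=
  exists gx, comp g x = Some gx /\
    (lt le x gx -> is_lub le (fun z => exists n, iter_opt n g x = Some z) y) /\
    (~ lt le x gx -> y = gx).

(* infinity-effectiveness: states finitely coded (S a countType, imposed *)
(* in the theorem), le decidable (le : rel S is boolean), each f in F a  *)
(* total-recursive function with decidable domain (S -> option S), and   *)
(* each g^oo computable: there is a function realising the acceleration. *)
Definition infty_effective : Prop :=
  exists acc : seq I -> S -> option S,
    forall g x, (comp g x = None -> acc g x = None) /\
                (comp g x <> None -> exists y, acc g x = Some y /\ accel g x y).

Definition Post (A : S -> Prop) (y : S) : Prop :=
  exists i x, A x /\ F i x = Some y.

Definition flat_le (B C : S -> Prop) : Prop :=
  forall x, (exists b, B b /\ le x b) -> exists c, C c /\ le x c.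

(* An execution is determined by the choices made at each iteration:     *)
(* at iteration n the pair (g n, a n) is chosen and b n = (g n)^oo(a n)  *)
(* is added.  A_n = value of A after n iterations.                       *)
Definition clover_A (s0 : S) (b : nat -> S) (n : nat) (x : S) : Prop :=
  x = s0 \/ exists k, (k < n)%N /\ x = b k.

Definition clover_choices (s0 : S) (g : nat -> seq I) (a b : nat -> S) : Prop :=
  forall n, clover_A s0 b n (a n) /\ accel (g n) (a n) (b n).

Definition clover_fair (s0 : S) (g : nat -> seq I) (a b : nat -> S) : Prop :=
  forall m w x, clover_A s0 b m x -> comp w x <> None ->
    exists n, (m <= n)%N /\ g n = w /\ a n = x.

(* the while loop exits: at some iteration the guard Post(A) <=^flat A holds *)
Definition clover_terminates (s0 : S) (b : nat -> S) : Prop :=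
  exists n, flat_le (Post (clover_A s0 b n)) (clover_A s0 b n).

End FTS.

(* Since every [A_n] lies in a fixed finite set and the [A_n] increase, the
   sequence [A_n] is eventually constant, say equal to [A_m].  Every successor
   [f_i x] of some [x] in [A_m] is then covered: fairness eventually picks the
   pair ([f_i], [x]), and the state [f_i^oo x >= f_i x] added at that iteration
   already belongs to [A_m].  Hence the loop guard holds at iteration [m]. *)
From Pilot Require Import Defs.
From mathcomp Require Import all_boot.
From Stdlib Require Import Classical.

Lemma finite_range_first_indices {T : eqType} (u : nat -> T) (l : seq T) :
  exists m, forall k, u k \in l -> exists2 k', (k' < m)%N & u k' = u k.
Proof.
elim: l => [|y l [m IHl]]; first by exists 0.
have [[k uk]|notin_range] := classic (exists k, u k = y).
- exists (maxn m k.+1) => j; rewrite inE => /orP[/eqP->|ujl].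
  + by exists k; rewrite ?leq_max ?ltnSn ?orbT.
  + by have [k' k'm <-] := IHl j ujl; exists k'; rewrite ?leq_max ?k'm.
- exists m => j; rewrite inE => /orP[/eqP uj|]; last exact: IHl.
  by case: notin_range; exists j.
Qed.

Lemma accel_ge_comp {S : Type} {I : finType} {le : rel S}
    {F : I -> S -> option S} {w : seq I} {x gx y : S} :
  (forall z, le z z) -> Defs.comp F w x = Some gx -> accel le F w x y -> le gx y.
Proof.
move=> le_refl wx [gx' [wx' [accel_lt accel_nlt]]].
rewrite wx in wx'; case: wx' => ?; subst gx'.
have [x_lt_gx|x_nlt_gx] := classic (lt le x gx).
- have [ub_iter _] := accel_lt x_lt_gx.
  by apply: ub_iter; exists 1; rewrite /= wx.
- by rewrite (accel_nlt x_nlt_gx).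
Qed.

Lemma clover_A_stable {S : eqType} {s0 : S} {b : nat -> S} :
  (exists l : seq S, forall n x, clover_A s0 b n x -> x \in l) ->
  exists m, forall n x, clover_A s0 b n x -> clover_A s0 b m x.
Proof.
case=> l A_in_l; have [m first_index] := finite_range_first_indices b l.
exists m => n x Ax; case: (Ax) => [->|[k [_ ->]]]; first by left.
have bk_in_l : b k \in l by apply: (A_in_l k.+1); right; exists k.
by have [k' k'm <-] := first_index k bk_in_l; right; exists k'.
Qed.

Theorem proposition5p4 (S : countType) (I : finType) (le : rel S)
  (F : I -> S -> option S)
  (HW : complete_functional_WSTS le F) (HE : infty_effective le F)
  (s0 : S) (g : nat -> seq I) (a b : nat -> S)
  (Hrun : clover_choices le F s0 g a b)
  (Hfair : clover_fair F s0 g a b)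
  (Hfin : exists l : seq S, forall n x, clover_A s0 b n x -> x \in l) :
  clover_terminates le F s0 b.
Proof.
case: HW => [[[le_refl _ le_trans] _] _ _].
have [m A_stable] := clover_A_stable Hfin.
exists m => z [y [[i [x [Ax Fx]]] z_le_y]].
have step_x : Defs.comp F [:: i] x = Some y by rewrite /= Fx.
have [n [_ [gn an]]] := Hfair m [:: i] x Ax (ltac:(by rewrite step_x)).
exists (b n); split; first by apply: (A_stable n.+1); right; exists n.
have [_ accel_n] := Hrun n; rewrite gn an in accel_n.
exact: le_trans z_le_y (accel_ge_comp le_refl step_x accel_n).
Qed.
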